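(* Let $A\in\mathbb{C}^{n\times n}$, $C\in\mathbb{C}^{1\times n}$, $j\in\mathbb{N}$, and let $s=\{s_1,\dots,s_j\}\subset\mathbb{C}\setminus\Lambda(A^* )$ be a multiset of $j$ finite poles (so $\infty\notin s$). Assume the rational Krylov subspace $\mathcal{K}_j(A^*,C^*,s)$ is $A^*$-variant. Then there exists a rational Arnoldi decomposition $$A^*V_{j+1}\underline{K_j}=V_{j+1}\underline{H_j}$$ associated to $\mathcal{K}_j(A^*,C^*,s)$ such that $\underline{K_j}=\begin{bmatrix}0\\ I_j\end{bmatrix}\in\mathbb{C}^{(j+1)\times j}$, $\underline{H_j}=\begin{bmatrix}h_j\\ H_{-j}\end{bmatrix}$ with $h_j\in\mathbb{C}^{1\times j}$ and $H_{-j}\in\mathbb{C}^{j\times j}$ upper triangular, and $V_{j+1}=\begin{bmatrix}C^*& Z_j\end{bmatrix}$, where $Z_j\in\mathbb{C}^{n\times j}$ is a basis of $\mathcal{K}_j(A^*,C^*,s)$.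
   Context: Notation: $\Pi_k$ is the set of complex polynomials of degree at most $k$; $\Lambda(M)$ is the spectrum of $M$; $M^*$ is the conjugate transpose. For $M\in\mathbb{C}^{n\times n}$, $b\in\mathbb{C}^n$, $j\in\mathbb{N}$ and a multiset $s=\{s_1,\dots,s_j\}\subset(\mathbb{C}\cup\{\infty\})\setminus\Lambda(M)$, put $q(x)=\prod_{i:\,s_i\neq\infty}(x-s_i)$; the rational Krylov subspace of order $j$ with poles $s$ is $\mathcal{K}_j(M,b,s)=\{q(M)^{-1}p(M)b : p\in\Pi_{j-1}\}$, and the augmented Krylov subspace is $\mathcal{K}_j^+(M,b,s)=\mathcal{K}_{j+1}(M,b,s\cup\{\infty\})$. A subspace $\mathcal{V}$ is called $M$-variant if $M\mathcal{V}\not\subseteq\mathcal{V}$. A rational Arnoldi decomposition (RAD) is a relation $MV_{j+1}\underline{K_j}=V_{j+1}\underline{H_j}$ with $V_{j+1}\in\mathbb{C}^{n\times(j+1)}$ of full column rank, $\underline{K_j},\underline{H_j}\in\mathbb{C}^{(j+1)\times j}$ upper Hessenberg, such that the lower $j\times j$ subpencil $(H_{-j},K_{-j})$ (rows $2,\dots,j+1$) is regular and its generalized eigenvalues, called the poles of the decomposition, lie outside $\Lambda(M)$. The RAD is associated to $\mathcal{K}_j(M,b,s)$ if its poles are $s$, $V_{j+1}e_1$ is a nonzero multiple of $b$, $\operatorname{span}(V_{j+1})=\mathcal{K}_j^+(M,b,s)$ and $\operatorname{span}(V_{j+1}\underline{K_j})=\mathcal{K}_j(M,b,s)$. *)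

(* Complex matrices are modelled over an arbitrary
   numClosedFieldType F (e.g. algC, or complex R); "^*" is its conjugation. *)
From mathcomp Require Import all_boot all_order all_algebra.
Set Implicit Arguments. Unset Strict Implicit. Unset Printing Implicit Defensive.
Import Order.TTheory GRing.Theory Num.Theory.
Local Open Scope ring_scope.

Section RAD.
Variable F : numClosedFieldType.

Definition ctrmx m n (M : 'M[F]_(m, n)) : 'M[F]_(n, m) := map_mx Num.conj M^T.

Definition peval n (M : 'M[F]_n) (p : {poly F}) : 'M[F]_n :=
  \sum_(i < size p) p`_i *: M ^+ i.

(* q(M) = prod over the finite poles (None = infinity) of (M - s_i I) *)
Definition qmat n (M : 'M[F]_n) (s : seq (option F)) : 'M[F]_n :=
  \prod_(x <- s) (if x is Some z then M - z%:M else 1%:M).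

Definition rkrylov n (M : 'M[F]_n) (b : 'cV[F]_n) (s : seq (option F))
  (v : 'cV[F]_n) : Prop :=
  exists p : {poly F}, (size p <= size s)%N /\
    v = invmx (qmat M s) *m peval M p *m b.

(* augmented Krylov space K_j^+(M,b,s) = K_{j+1}(M,b,s u {oo}) *)
Definition rkrylov_aug n (M : 'M[F]_n) (b : 'cV[F]_n) (s : seq (option F)) :=
  rkrylov M b (None :: s).

Definition colspan_is n k (W : 'M[F]_(n, k)) (P : 'cV[F]_n -> Prop) : Prop :=
  forall v, P v <-> exists x : 'cV[F]_k, v = W *m x.

Definition variant n (M : 'M[F]_n) (P : 'cV[F]_n -> Prop) : Prop :=
  ~ (forall v, P v -> P (M *m v)).

Definition upper_hessenberg j (H : 'M[F]_(j.+1, j)) : Prop :=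
  forall (i : 'I_j.+1) (k : 'I_j), (k.+1 < i)%N -> H i k = 0.

Definition upper_triangular j (H : 'M[F]_j) : Prop :=
  forall i k : 'I_j, (k < i)%N -> H i k = 0.

Definition lowerblk j (H : 'M[F]_(j.+1, j)) : 'M[F]_j := @dsubmx F 1 j j H.

Definition pencil_poly j (H K : 'M[F]_j) : {poly F} :=
  \det (\matrix_(a, b) ((H a b)%:P - 'X * (K a b)%:P)).

Definition regular_pencil j (H K : 'M[F]_j) : Prop := pencil_poly H K != 0.

(* the generalized eigenvalues of the regular j x j pencil (H,K), counted with
   multiplicity, are exactly the (finite) multiset s of size j:
   det(H - zK) = c * prod (z - s_i), c <> 0 (degree j, so no infinite ones). *)
Definition pencil_poles_are j (H K : 'M[F]_j) (s : seq F) : Prop :=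
  size s = j /\
  exists2 c : F, c != 0 & pencil_poly H K = c *: \prod_(x <- s) ('X - x%:P).

Definition is_RAD n j (M : 'M[F]_n) (V : 'M[F]_(n, j.+1))
  (K H : 'M[F]_(j.+1, j)) : Prop :=
  [/\ M *m V *m K = V *m H,
      \rank V = j.+1,
      upper_hessenberg K /\ upper_hessenberg H,
      regular_pencil (lowerblk H) (lowerblk K) &
      forall z, root (pencil_poly (lowerblk H) (lowerblk K)) z ->
        ~~ eigenvalue M z].

Definition RAD_associated n j (M : 'M[F]_n) (b : 'cV[F]_n) (s : seq F)
  (V : 'M[F]_(n, j.+1)) (K H : 'M[F]_(j.+1, j)) : Prop :=
  [/\ is_RAD M V K H,
      pencil_poles_are (lowerblk H) (lowerblk K) s,
      (exists2 a : F, a != 0 & col 0 V = a *: b),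
      colspan_is V (rkrylov_aug M b (map Some s)) &
      colspan_is (V *m K) (rkrylov M b (map Some s))].

End RAD.

From mathcomp Require Import all_boot all_order all_algebra.
Set Implicit Arguments. Unset Strict Implicit. Unset Printing Implicit Defensive.
Import Order.TTheory GRing.Theory Num.Theory.
Local Open Scope ring_scope.

(* Write M = A^*, b = C^* and t = [t_0; ...; t_(j-1)] for the finite poles, and
   phi(p) = q(M)^-1 p(M) b with q = prod_i (X - t_i).  Then K_j(M,b,t) and
   K_j^+(M,b,t) are the images under phi of the polynomials of degree < j and
   <= j respectively.
   - The nodal polynomials D_k = prod_(i >= k) (X - t_i), 0 <= k <= j, form a
     basis of the polynomials of degree <= j, and D_0 = q, so phi(D_0) = b.
   - If p(M) b = 0 for a nonzero p of degree <= j, then K_j is M-invariant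
     (M phi(r) = phi(X r) = phi(X r mod p)); so M-variance makes phi injective
     on the polynomials of degree <= j.
   - Hence Z = [phi(D_1) .. phi(D_j)] is a basis of K_j and V = [b Z] one of
     K_j^+, and X D_(k+1) = D_k + t_k D_(k+1) gives M V [0; I] = M Z = V H for
     the Hessenberg H with rows e_1^T and bidiag(t; 1): its lower block is upper
     triangular with det(H_(-j) - zI) = (-1)^j q(z), whose roots are the poles. *)

Section NodalBasis.
Variable F : fieldType.
Implicit Types (t : seq F) (p : {poly F}).

Definition nodal t k : {poly F} := \prod_(x <- drop k t) ('X - x%:P).

Lemma size_nodal t k : size (nodal t k) = (size t - k).+1.
Proof. by rewrite size_prod_XsubC size_drop. Qed.

Lemma nodal_cons a t k : nodal (a :: t) k.+1 = nodal t k.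
Proof. by []. Qed.

Lemma nodal_step t k : (k < size t)%N -> nodal t k = ('X - (t`_k)%:P) * nodal t k.+1.
Proof. by move=> ltkt; rewrite /nodal (drop_nth 0 ltkt) big_cons. Qed.

Lemma lead_nodal0 t : (nodal t 0)`_(size t) = 1.
Proof.
have /monicP : nodal t 0 \is monic by apply: monic_prod_XsubC.
by rewrite lead_coefE size_nodal subn0.
Qed.

Lemma size_nodal_comb t (c : 'I_(size t).+1 -> F) :
  (size (\sum_k c k *: nodal t k)%R <= (size t).+1)%N.
Proof.
apply/leq_sizeP => i lt_i; rewrite coef_sum big1 // => k _.
by rewrite coefZ nth_default ?mulr0 // size_nodal (leq_trans _ lt_i) // ltnS leq_subr.
Qed.

(* D_0, ..., D_j span the polynomials of degree <= j: peel off the leading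
   coefficient with D_0 and recurse on the tail of t *)
Lemma nodal_span t p : (size p <= (size t).+1)%N ->
  exists c : 'I_(size t).+1 -> F, p = \sum_k c k *: nodal t k.
Proof.
elim: t p => [|a t IH] p sz_p.
  exists (fun=> p`_0); rewrite big_ord1 /nodal big_nil.
  by rewrite -mul_polyC mulr1 -size1_polyC.
pose c0 := p`_(size t).+1.
have sz_r : (size (p - c0 *: nodal (a :: t) 0)%R <= (size t).+1)%N.
  apply/leq_sizeP => i; rewrite leq_eqVlt => /orP[/eqP <-|lt_i].
    by rewrite coefB coefZ (lead_nodal0 (a :: t)) mulr1 subrr.
  rewrite nth_default // (leq_trans (size_polyD _ _)) // geq_max.
  rewrite size_polyN (leq_trans sz_p lt_i) (leq_trans (size_scale_leq _ _)) //.
  by rewrite size_nodal subn0.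
have [c def_r] := IH _ sz_r.
exists (fun k => if unlift ord0 k is Some k' then c k' else c0).
rewrite big_ord_recl unlift_none.
under eq_bigr do rewrite liftK nodal_cons.
by rewrite -def_r addrC subrK.
Qed.

(* D_0, ..., D_j are linearly independent: only D_0 reaches degree j *)
Lemma nodal_free t (c : 'I_(size t).+1 -> F) :
  \sum_k c k *: nodal t k = 0 -> forall k, c k = 0.
Proof.
elim: t c => [|a t IH] c.
  rewrite big_ord1 /nodal big_nil => /eqP; rewrite scaler_eq0 oner_eq0 orbF.
  by move=> /eqP c0 k; rewrite (ord1 k).
rewrite big_ord_recl; under eq_bigr do rewrite nodal_cons.
move=> sum0.
have c0 : c ord0 = 0.
  have := congr1 (fun q : {poly F} => q`_(size t).+1) sum0.
  rewrite /= coef0 coefD coefZ (lead_nodal0 (a :: t)) mulr1 nth_default ?addr0 //.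
  exact: (size_nodal_comb (c \o lift ord0)).
move: sum0; rewrite c0 scale0r add0r => /(IH (c \o lift ord0)) c'0 k.
by case: (unliftP ord0 k) => [k' ->|->] //; apply: c'0.
Qed.

Lemma nodal_shift t k : (k < size t)%N ->
  'X * nodal t k.+1 = nodal t k + t`_k *: nodal t k.+1.
Proof. by move=> ltkt; rewrite (nodal_step ltkt) mulrBl mul_polyC subrK. Qed.

End NodalBasis.

(* the matrix of multiplication by X from the basis D_1..D_j to D_0..D_j:
   column k holds 1 in row k and t_k in row k+1 *)
Definition nodal_hess (F : fieldType) (t : seq F) : 'M[F]_((size t).+1, size t) :=
  \matrix_(l, k) ((l == k :> nat)%:R + (l == k.+1 :> nat)%:R * t`_k).

Lemma nodal_hess_comb (F : fieldType) (t : seq F) (k : 'I_(size t)) :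
  \sum_l nodal_hess t l k *: nodal t l = 'X * nodal t k.+1.
Proof.
have sum_delta i (P : nat -> {poly F}) : (i < (size t).+1)%N ->
    \sum_(l < (size t).+1) (l == i :> nat)%:R *: P l = P i.
  move=> lt_i; rewrite (eq_bigr (fun l : 'I__ => if l == i :> nat then P l else 0)).
    by rewrite -big_mkcond big_ord1_eq lt_i.
  by move=> l _; case: (_ == _); rewrite ?scale1r ?scale0r.
under eq_bigr do rewrite mxE scalerDl -scalerA.
rewrite big_split /= (sum_delta k) ?(sum_delta k.+1 (fun l => t`_k *: nodal t l))
  ?ltnS //.
  by rewrite nodal_shift.
exact: ltnW.
Qed.

Section MatrixPolynomials.
Variables (F : fieldType) (n : nat) (M : 'M[F]_n.+1).

Lemma unitmx_shift z : ~~ eigenvalue M z -> M - z%:M \in unitmx.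
Proof.
move=> not_eig; rewrite -row_free_unit; apply: inj_row_free => v.
rewrite mulmxBr mul_mx_scalar => /eqP; rewrite subr_eq0 => /eqP Mv.
by apply/eqP; apply: contraR not_eig => v_neq0; apply/eigenvalueP; exists v.
Qed.

Lemma unitmx_nodal t : (forall z, z \in t -> ~~ eigenvalue M z) ->
  horner_mx M (nodal t 0) \in unitmx.
Proof.
rewrite /nodal drop0; elim: t => [|x t IH] not_eig.
  by rewrite big_nil rmorph1 unitmx1.
rewrite big_cons rmorphM rmorphB /= horner_mx_X horner_mx_C -mulmxE unitmx_mul.
rewrite unitmx_shift ?not_eig ?mem_head //=.
by apply: IH => z zt; rewrite not_eig // inE zt orbT.
Qed.

End MatrixPolynomials.

Lemma col_matrixP (F : fieldType) m k (A B : 'M[F]_(m, k)) :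
  (forall l, col l A = col l B) -> A = B.
Proof.
by move=> eq_col; apply/matrixP => i l; move/colP: (eq_col l) => /(_ i); rewrite !mxE.
Qed.

Lemma rank_col_free (F : fieldType) m k (W : 'M[F]_(m, k)) :
  (forall x : 'cV_k, W *m x = 0 -> x = 0) -> \rank W = k.
Proof.
move=> Wfree; rewrite -mxrank_tr; apply/eqP; apply: inj_row_free => v vW0.
apply: trmx_inj; rewrite trmx0; apply: Wfree.
by rewrite -[W]trmxK -trmx_mul vW0 trmx0.
Qed.

Section KrylovMap.
Variables (F : fieldType) (n : nat) (M : 'M[F]_n.+1) (b : 'cV[F]_n.+1) (t : seq F).
Implicit Types (p r : {poly F}) (v : 'cV[F]_n.+1).

Definition krylov_map p : 'cV[F]_n.+1 :=
  invmx (horner_mx M (nodal t 0)) *m horner_mx M p *m b.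
Local Notation phi := krylov_map.

(* the image under phi of the polynomials of size at most m;
   K_j(M,b,t) is [Kpoly (size t)] and K_j^+(M,b,t) is [Kpoly (size t).+1] *)
Definition Kpoly m v : Prop := exists p, (size p <= m)%N /\ v = phi p.

Definition krylov_mx (P : nat -> {poly F}) m : 'M[F]_(n.+1, m) :=
  \matrix_(i < n.+1, k < m) phi (P k) i 0.

Lemma col_krylov_mx (P : nat -> {poly F}) m (k : 'I_m) :
  col k (krylov_mx P m) = phi (P k).
Proof. by apply/colP => i; rewrite !mxE. Qed.

Lemma krylov_mapZ c p : phi (c *: p) = c *: phi p.
Proof. by rewrite /phi linearZ /= -scalemxAr -scalemxAl. Qed.

Lemma krylov_map_comb m (c : 'I_m -> F) (P : nat -> {poly F}) :
  phi (\sum_(k < m) c k *: P k) = \sum_(k < m) c k *: phi (P k).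
Proof.
rewrite {1}/phi raddf_sum /= mulmx_sumr mulmx_suml.
by apply: eq_bigr => k _; apply: krylov_mapZ.
Qed.

Lemma krylov_mx_mul (P : nat -> {poly F}) m (x : 'cV[F]_m) :
  krylov_mx P m *m x = phi (\sum_(k < m) x k 0 *: P k).
Proof.
rewrite krylov_map_comb; apply/colP => i; rewrite !mxE summxE.
by apply: eq_bigr => k _; rewrite !mxE mulrC.
Qed.

Hypothesis unitQ : horner_mx M (nodal t 0) \in unitmx.

Lemma krylov_map_nodal0 : phi (nodal t 0) = b.
Proof. by rewrite /phi mulVmx // mul1mx. Qed.

(* phi intertwines multiplication by X with M, since M commutes with q(M)^-1 *)
Lemma krylov_mapX p : phi ('X * p) = M *m phi p.
Proof.
have MQ : GRing.comm M (horner_mx M (nodal t 0)).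
  exact: (comm_mx_horner _ (erefl (M *m M))).
have MQV : M *m invmx (horner_mx M (nodal t 0)) = invmx (horner_mx M (nodal t 0)) *m M.
  exact: (commrV MQ).
by rewrite /phi !mulmxA MQV rmorphM /= horner_mx_X -mulmxE !mulmxA.
Qed.

Lemma krylov_nodal_shift :
  M *m krylov_mx (fun k => nodal t k.+1) (size t)
  = krylov_mx (nodal t) (size t).+1 *m nodal_hess t.
Proof.
apply: col_matrixP => k; rewrite !colE -!mulmxA -!colE col_krylov_mx krylov_mx_mul.
rewrite -krylov_mapX -nodal_hess_comb; congr phi.
by apply: eq_bigr => l _; rewrite !mxE.
Qed.

(* if phi p = 0 then every phi (r * p) vanishes: p(M) annihilates b *)
Lemma krylov_map_mulr r p : phi p = 0 -> phi (r * p) = 0.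
Proof.
move=> phip0; have pb0 : horner_mx M p *m b = 0.
  have <- : horner_mx M (nodal t 0) *m phi p = horner_mx M p *m b.
    by rewrite /phi !mulmxA mulmxV // mul1mx.
  by rewrite phip0 mulmx0.
by rewrite /phi rmorphM /= -mulmxE -!mulmxA pb0 !mulmx0.
Qed.

(* A nonzero polynomial of degree <= j mapped to 0 makes K_j M-invariant:
   M phi(r) = phi(X r) = phi((X r) mod p). *)
Lemma annihilator_invariant p : p != 0 -> (size p <= (size t).+1)%N ->
  phi p = 0 -> forall v, Kpoly (size t) v -> Kpoly (size t) (M *m v).
Proof.
move=> p_neq0 sz_p phip0 v [r [_ ->]]; rewrite -krylov_mapX.
exists ((('X * r) %% p)%R); split; first by rewrite -ltnS (leq_trans _ sz_p) // ltn_modp.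
by rewrite {1}(divp_eq ('X * r) p) /phi rmorphD mulmxDr mulmxDl
  [X in X + _ = _](krylov_map_mulr _ phip0) add0r.
Qed.

Lemma krylov_map_inj : ~ (forall v, Kpoly (size t) v -> Kpoly (size t) (M *m v)) ->
  forall p, (size p <= (size t).+1)%N -> phi p = 0 -> p = 0.
Proof.
move=> variant_K p sz_p phip0; apply/eqP; apply: contraT => p_neq0.
by case: variant_K; apply: (annihilator_invariant p_neq0).
Qed.

End KrylovMap.

Section NodalKrylovBasis.
Variables (F : fieldType) (n : nat) (M : 'M[F]_n.+1) (b : 'cV[F]_n.+1) (t : seq F).
Local Notation phi := (krylov_map M b t).

Lemma nodal_colspan u v :
  Kpoly M b t (size u).+1 v <-> exists x, v = krylov_mx M b t (nodal u) (size u).+1 *m x.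
Proof.
split => [[p [sz_p ->]]|[x ->]].
  have [c ->] := nodal_span sz_p.
  exists (\col_k c k); rewrite krylov_mx_mul.
  by congr phi; apply: eq_bigr => k _; rewrite mxE.
rewrite krylov_mx_mul; exists (\sum_k x k 0 *: nodal u k).
by split=> //; apply: size_nodal_comb.
Qed.

Hypothesis phi_inj : forall p : {poly F}, (size p <= (size t).+1)%N -> phi p = 0 -> p = 0.

(* on polynomials of degree <= size t, phi is injective, so these columns
   are linearly independent *)
Lemma nodal_rank u : (size u <= size t)%N ->
  \rank (krylov_mx M b t (nodal u) (size u).+1) = (size u).+1.
Proof.
move=> sz_u; apply: rank_col_free => x; rewrite krylov_mx_mul => /phi_inj comb0.
apply/colP => k; rewrite mxE; apply: (nodal_free (c := fun k => x k 0)) k.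
by apply: comb0; rewrite (leq_trans (size_nodal_comb _)) ?ltnS.
Qed.

End NodalKrylovBasis.

Section PencilStructure.
Variable F : numClosedFieldType.

Lemma nodal_hess_hessenberg (t : seq F) : upper_hessenberg (nodal_hess t).
Proof.
by move=> l k lt_kl; rewrite mxE gtn_eqF 1?gtn_eqF ?mul0r ?addr0 // ltnW.
Qed.

Lemma shift_hessenberg j : upper_hessenberg (col_mx (0 : 'M[F]_(1, j)) 1%:M).
Proof.
move=> l k lt_kl; rewrite mxE; case: splitP => [l0 _|l' def_l]; first by rewrite mxE.
move: lt_kl; rewrite def_l add1n ltnS mxE => lt_kl.
by rewrite (_ : l' == k = false) //; apply/eqP => eq_lk; rewrite eq_lk ltnn in lt_kl.
Qed.

Lemma lower_nodal_hessE (t : seq F) (i k : 'I_(size t)) :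
  lowerblk (nodal_hess t) i k = (i.+1 == k :> nat)%:R + (i == k :> nat)%:R * t`_k.
Proof. by rewrite /lowerblk !mxE. Qed.

Lemma lower_nodal_hess_diag (t : seq F) (i : 'I_(size t)) :
  lowerblk (nodal_hess t) i i = t`_i.
Proof. by rewrite lower_nodal_hessE (gtn_eqF (ltnSn i)) eqxx mul1r add0r. Qed.

Lemma lower_nodal_hess_triangular (t : seq F) :
  upper_triangular (lowerblk (nodal_hess t)).
Proof.
move=> i k lt_ki; rewrite lower_nodal_hessE (gtn_eqF lt_ki).
by rewrite (@gtn_eqF k i.+1) ?mul0r ?addr0 // ltnW.
Qed.

Lemma pencil_nodal_hess (t : seq F) :
  pencil_poly (lowerblk (nodal_hess t)) 1%:M
  = (-1) ^+ size t *: \prod_(x <- t) ('X - x%:P).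
Proof.
rewrite /pencil_poly -det_tr det_trig; last first.
  apply/forallP => i; apply/forallP => k; apply/implyP => lt_ik.
  have ord_ki : (k == i) = false.
    by apply/eqP => eq_ki; rewrite eq_ki ltnn in lt_ik.
  rewrite 2!mxE (lower_nodal_hess_triangular lt_ik) mxE ord_ki.
  by rewrite mulr0n polyC0 mulr0 subr0.
rewrite (eq_bigr (fun i : 'I_(size t) => -1 * ('X - (t`_i)%:P))) => [|i _]; last first.
  by rewrite 2!mxE lower_nodal_hess_diag mxE eqxx polyC1 mulr1 mulN1r opprB.
rewrite big_split prodr_const card_ord /= -mul_polyC rmorphXn rmorphN1.
by rewrite (big_nth 0) big_mkord.
Qed.

End PencilStructure.

Section KrylovSpaces.
Variables (F : numClosedFieldType) (n : nat) (M : 'M[F]_n.+1).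

Lemma peval_horner p : peval M p = horner_mx M p.
Proof.
rewrite -{2}[p]coefK poly_def raddf_sum /=; apply: eq_bigr => i _.
by rewrite horner_mxZ rmorphXn /= horner_mx_X.
Qed.

Lemma qmat_nodal t : qmat M (map Some t) = horner_mx M (nodal t 0).
Proof.
rewrite /qmat /nodal drop0 big_map rmorph_prod; apply: eq_bigr => x _.
by rewrite rmorphB /= horner_mx_X horner_mx_C.
Qed.

Lemma qmat_infty l : qmat M (None :: l) = qmat M l.
Proof. by rewrite /qmat big_cons mul1r. Qed.

Variables (b : 'cV[F]_n.+1) (t : seq F).

Lemma rkrylov_Kpoly l v : qmat M l = horner_mx M (nodal t 0) ->
  rkrylov M b l v <-> Kpoly M b t (size l) v.
Proof.
by move=> def_q; rewrite /rkrylov def_q; split=> -[p [sz_p ->]]; exists p;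
  rewrite peval_horner.
Qed.

Lemma rkrylovE v : rkrylov M b (map Some t) v <-> Kpoly M b t (size t) v.
Proof. by rewrite -(size_map Some t); apply/rkrylov_Kpoly/qmat_nodal. Qed.

Lemma rkrylov_augE v : rkrylov_aug M b (map Some t) v <-> Kpoly M b t (size t).+1 v.
Proof.
by rewrite -(size_map Some t); apply/rkrylov_Kpoly; rewrite qmat_infty qmat_nodal.
Qed.

Lemma variant_Kpoly : variant M (rkrylov M b (map Some t)) ->
  ~ (forall v, Kpoly M b t (size t) v -> Kpoly M b t (size t) (M *m v)).
Proof.
by move=> variant_K invariant_K; apply: variant_K => v /rkrylovE/invariant_K/rkrylovE.
Qed.

End KrylovSpaces.

Lemma variant_flat (F : numClosedFieldType) (M : 'M[F]_0) (P : 'cV[F]_0 -> Prop) :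
  ~ variant M P.
Proof. by case=> v Pv; rewrite [M *m v]flatmx0 -(flatmx0 v). Qed.

Lemma variant_order0 (F : numClosedFieldType) n (M : 'M[F]_n) (b : 'cV[F]_n) :
  ~ variant M (rkrylov M b [::]).
Proof.
case=> v [p [sz_p ->]]; exists 0; split; first by rewrite size_poly0.
have -> : p = 0 by apply/eqP; rewrite -size_poly_eq0 -leqn0.
by rewrite /peval size_poly0 !big_ord0 !mulmx0 !mul0mx mulmx0.
Qed.

Section NodalRAD.
Variables (F : numClosedFieldType) (n : nat) (M : 'M[F]_n.+1) (b : 'cV[F]_n.+1).
Variables (a : F) (s : seq F).
Let t := a :: s.
Hypothesis not_eig : forall z, z \in t -> ~~ eigenvalue M z.
Hypothesis variant_K : variant M (rkrylov M b (map Some t)).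

Let unitQ : horner_mx M (nodal t 0) \in unitmx := unitmx_nodal not_eig.
Let phi_inj := krylov_map_inj unitQ (variant_Kpoly variant_K).

(* Z = [phi(D_1) .. phi(D_j)], V = [phi(D_0) .. phi(D_j)] (D_(k+1) = nodal s k) *)
Let Z := krylov_mx M b t (nodal s) (size t).
Let V := krylov_mx M b t (nodal t) (size t).+1.
Let K := col_mx (0 : 'M[F]_(1, size t)) (1%:M : 'M[F]_(size t)).

Lemma nodal_V_first : V = row_mx b Z.
Proof.
apply/matrixP => i k; rewrite [V i k]mxE [row_mx b Z i k]mxE.
case: splitP => [k0 def_k|k' def_k]; last by rewrite [Z i k']mxE def_k.
by rewrite def_k (ord1 k0) -[in RHS](krylov_map_nodal0 b unitQ).
Qed.

Lemma nodal_Z_span : colspan_is Z (rkrylov M b (map Some t)).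
Proof. by move=> v; apply: iff_trans (rkrylovE _ _ _ v) _; apply: nodal_colspan. Qed.

Lemma nodal_V_span : colspan_is (row_mx b Z) (rkrylov_aug M b (map Some t)).
Proof.
by move=> v; rewrite -nodal_V_first; apply: iff_trans (rkrylov_augE _ _ _ v) _;
  apply: nodal_colspan.
Qed.

Lemma nodal_Z_rank : \rank Z = size t.
Proof. exact: nodal_rank phi_inj _ (leqnSn _). Qed.

Lemma nodal_V_rank : \rank (row_mx b Z) = (size t).+1.
Proof. by rewrite -nodal_V_first; apply: nodal_rank phi_inj _ (leqnn _). Qed.

Lemma nodal_VK : row_mx b Z *m K = Z.
Proof. by rewrite mul_row_col mulmx0 add0r mulmx1. Qed.

Lemma nodal_arnoldi : M *m row_mx b Z *m K = row_mx b Z *m nodal_hess t.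
Proof.
by rewrite -mulmxA nodal_VK -nodal_V_first krylov_nodal_shift.
Qed.

Lemma nodal_RAD_associated :
  RAD_associated M b t (row_mx b Z) K (nodal_hess t).
Proof.
have lowK : lowerblk K = 1%:M := col_mxKd _ _.
have sgn_neq0 : (-1) ^+ size t != 0 :> F by rewrite expf_neq0 // oppr_eq0 oner_eq0.
split.
- split; [exact: nodal_arnoldi | exact: nodal_V_rank | | |].
  + by split; [apply: shift_hessenberg | apply: nodal_hess_hessenberg].
  + rewrite /regular_pencil lowK pencil_nodal_hess scaler_eq0 negb_or sgn_neq0.
    exact/monic_neq0/monic_prod_XsubC.
  + by move=> z; rewrite lowK pencil_nodal_hess rootZ // root_prod_XsubC; apply: not_eig.
- by split=> //; rewrite lowK; exists ((-1) ^+ size t); last exact: pencil_nodal_hess.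
- exists 1; rewrite ?oner_neq0 // scale1r -nodal_V_first.
  by rewrite col_krylov_mx (krylov_map_nodal0 b unitQ).
- exact: nodal_V_span.
- by rewrite nodal_VK; apply: nodal_Z_span.
Qed.

End NodalRAD.

Theorem lemma3p1 (F : numClosedFieldType) (n j : nat)
  (A : 'M[F]_n) (C : 'rV[F]_n) (s : seq F) :
  size s = j ->
  (forall z, z \in s -> ~~ eigenvalue (ctrmx A) z) ->
  variant (ctrmx A) (rkrylov (ctrmx A) (ctrmx C) (map Some s)) ->
  exists (h : 'rV[F]_j) (Hm : 'M[F]_j) (Z : 'M[F]_(n, j)),
    [/\ upper_triangular Hm,
        \rank Z = j,
        colspan_is Z (rkrylov (ctrmx A) (ctrmx C) (map Some s)) &
        RAD_associated (ctrmx A) (ctrmx C) s (row_mx (ctrmx C) Z)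
          (col_mx (0 : 'M[F]_(1, j)) (1%:M : 'M[F]_j)) (col_mx h Hm)].
Proof.
move=> <- {j} not_eig variant_K.
case: n A C not_eig variant_K => [|n] A C not_eig variant_K.
  by case: (variant_flat variant_K).
case: s not_eig variant_K => [|a s] not_eig variant_K.
  by case: (variant_order0 variant_K).
set H := nodal_hess (a :: s).
exists (usubmx (H : 'M_(1 + _, _))), (lowerblk H),
  (krylov_mx (ctrmx A) (ctrmx C) (a :: s) (nodal s) (size (a :: s))).
rewrite vsubmxK; split.
- exact: lower_nodal_hess_triangular.
- exact: nodal_Z_rank.
- exact: nodal_Z_span.
- exact: nodal_RAD_associated.
Qed.
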